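(* Let $I\neq\emptyset$ be any index set. Suppose that $Q$ is a non-empty subset of $l_\infty(I)$ given by an arbitrary system of inequalities, each of the form $\sigma x_i\le C$ or $\sigma x_i+\tau x_j\le C$ with $i,j\in I$, $|\sigma|=|\tau|=1$ and $C\in\mathbb{R}$. Then $Q$, with the metric induced by the sup norm, is injective.
   Context: $l_\infty(I)$ is the Banach space of bounded real families $(x_i)_{i\in I}$ with the sup norm. A metric space $Y$ is injective if for every metric space $B$, every $A\subset B$ and every 1-Lipschitz $f\colon A\to Y$ there is a 1-Lipschitz extension $B\to Y$. *)

From Stdlib Require Import Reals.
From Coquelicot Require Import Coquelicot.
Open Scope R_scope.

Definition is_metric (X : Type) (d : X -> X -> R) : Prop :=
  (forall x y, 0 <= d x y) /\
  (forall x y, d x y = 0 <-> x = y) /\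
  (forall x y, d x y = d y x) /\
  (forall x y z, d x z <= d x y + d y z).

Definition injective_metric (Y : Type) (dY : Y -> Y -> R) : Prop :=
  forall (B : Type) (dB : B -> B -> R), is_metric B dB ->
  forall (A : B -> Prop) (f : {b : B | A b} -> Y),
    (forall a a' : {b : B | A b}, dY (f a) (f a') <= dB (proj1_sig a) (proj1_sig a')) ->
    exists g : B -> Y,
      (forall b b', dY (g b) (g b') <= dB b b') /\
      (forall a : {b : B | A b}, g (proj1_sig a) = f a).

Definition linf (I : Type) (x : I -> R) : Prop :=
  exists M, forall i, Rabs (x i) <= M.

Definition supdist {I : Type} (x y : I -> R) : R :=
  real (Lub_Rbar (fun r => exists i, r = Rabs (x i - y i))).

Inductive ineq (I : Type) : Type :=
  | Ineq1 (sigma : R) (i : I) (C : R)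
  | Ineq2 (sigma tau : R) (i j : I) (C : R).
Arguments Ineq1 {I}.
Arguments Ineq2 {I}.

Definition ineq_wf {I : Type} (c : ineq I) : Prop :=
  match c with
  | Ineq1 sigma _ _ => Rabs sigma = 1
  | Ineq2 sigma tau _ _ _ => Rabs sigma = 1 /\ Rabs tau = 1
  end.

Definition ineq_sat {I : Type} (c : ineq I) (x : I -> R) : Prop :=
  match c with
  | Ineq1 sigma i C => sigma * x i <= C
  | Ineq2 sigma tau i j C => sigma * x i + tau * x j <= C
  end.

Definition Qset {I : Type} (S : ineq I -> Prop) (x : I -> R) : Prop :=
  linf I x /\ forall c, S c -> ineq_sat c x.

Definition Qspace {I : Type} (S : ineq I -> Prop) : Type := {x : I -> R | Qset S x}.

Definition Qdist {I : Type} (S : ineq I -> Prop) (a b : Qspace S) : R :=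
  supdist (proj1_sig a) (proj1_sig b).

(* For each coordinate i and sign s, extend the 1-Lipschitz function
   a |-> s f(a)_i from A to B by the McShane formula
   M_s,i(b) = sup_a (s f(a)_i - d(b, a)), and set
   x(b)_i = (M_1,i(b) - M_-1,i(b)) / 2.
   Each M_s,i is 1-Lipschitz and within d(b, a) of s f(a)_i, so x is
   1-Lipschitz for the sup norm, bounded, and extends f.  A constraint
   s x_i + t x_j <= C (with i = j, t = s for one-variable constraints)
   holds on A, i.e. s f_i <= -t f_j + C there; since the McShane extension
   is monotone and commutes with adding constants, M_s,i <= M_-t,j + C and
   M_t,j <= M_-s,i + C, and the half-sum of these is the constraint for x(b). *)

From Stdlib Require Import Reals Lra Classical ProofIrrelevance FunctionalExtensionality.
From Coquelicot Require Import Coquelicot.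
Open Scope R_scope.

Lemma real_Lub_Rbar_ge (E : R -> Prop) (M x : R) :
  E x -> (forall y, E y -> y <= M) -> x <= real (Lub_Rbar E).
Proof.
  intros Ex HM. destruct (Lub_Rbar_correct E) as [Hub Hlub].
  pose proof (Hub x Ex). pose proof (Hlub (Finite M) HM).
  destruct (Lub_Rbar E); simpl in *; try contradiction; lra.
Qed.

Lemma real_Lub_Rbar_le (E : R -> Prop) (M x : R) :
  E x -> (forall y, E y -> y <= M) -> real (Lub_Rbar E) <= M.
Proof.
  intros Ex HM. destruct (Lub_Rbar_correct E) as [Hub Hlub].
  pose proof (Hub x Ex). pose proof (Hlub (Finite M) HM).
  destruct (Lub_Rbar E); simpl in *; try contradiction; lra.
Qed.

Lemma Rabs_sub_le_supdist {I : Type} (x y : I -> R) (i : I) :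
  linf I x -> linf I y -> Rabs (x i - y i) <= supdist x y.
Proof.
  intros [Mx Hx] [My Hy]. apply (real_Lub_Rbar_ge _ (Mx + My)).
  - exists i; reflexivity.
  - intros z [j ->]. pose proof (Rabs_triang (x j) (- y j)) as Htri.
    rewrite Rabs_Ropp in Htri. pose proof (Hx j); pose proof (Hy j).
    unfold Rminus; lra.
Qed.

Lemma supdist_le {I : Type} (x y : I -> R) (D : R) :
  inhabited I -> (forall i, Rabs (x i - y i) <= D) -> supdist x y <= D.
Proof.
  intros [i0] H. apply (real_Lub_Rbar_le _ D (Rabs (x i0 - y i0))).
  - exists i0; reflexivity.
  - intros z [j ->]. apply H.
Qed.

Lemma Rabs_eq_1 (s : R) : Rabs s = 1 -> s = 1 \/ s = - 1.
Proof. unfold Rabs. destruct (Rcase_abs s); intros; lra. Qed.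

Lemma Rmult_le_Rabs_unit (s y : R) : Rabs s = 1 -> s * y <= Rabs y.
Proof.
  intros Hs. rewrite <- (Rmult_1_l (Rabs y)), <- Hs, <- Rabs_mult. apply Rle_abs.
Qed.

Section McShane.

Context {B : Type} (dB : B -> B -> R) {T : Type} (p : T -> B).
Hypothesis (HdB : is_metric B dB) (HT : inhabited T).

Definition lipschitz_on (u : T -> R) : Prop :=
  forall a a', u a <= u a' + dB (p a) (p a').

Definition mcshane (u : T -> R) (b : B) : R :=
  real (Lub_Rbar (fun z => exists a, z = u a - dB b (p a))).

Lemma mcshane_ge (u : T -> R) (a : T) (b : B) :
  lipschitz_on u -> u a - dB b (p a) <= mcshane u b.
Proof.
  intros Hu. destruct HdB as [_ [_ [Hsym Htri]]].
  apply (real_Lub_Rbar_ge _ (u a + dB b (p a))).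
  - exists a; reflexivity.
  - intros z [a' ->]. pose proof (Hu a' a). pose proof (Htri (p a') b (p a)).
    pose proof (Hsym b (p a')). lra.
Qed.

Lemma mcshane_le (u : T -> R) (b : B) (M : R) :
  (forall a, u a - dB b (p a) <= M) -> mcshane u b <= M.
Proof.
  intros H. destruct HT as [a0].
  apply (real_Lub_Rbar_le _ M (u a0 - dB b (p a0))).
  - exists a0; reflexivity.
  - intros z [a ->]. apply H.
Qed.

Lemma mcshane_lipschitz (u : T -> R) (b b' : B) :
  lipschitz_on u -> mcshane u b <= mcshane u b' + dB b b'.
Proof.
  intros Hu. destruct HdB as [_ [_ [Hsym Htri]]]. apply mcshane_le. intros a.
  pose proof (mcshane_ge u a b' Hu). pose proof (Htri b' b (p a)).
  pose proof (Hsym b' b). lra.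
Qed.

Lemma mcshane_near (u : T -> R) (a : T) (b : B) :
  lipschitz_on u -> Rabs (mcshane u b - u a) <= dB b (p a).
Proof.
  intros Hu. destruct HdB as [_ [_ [Hsym Htri]]]. apply Rabs_le_between'. split.
  - pose proof (mcshane_ge u a b Hu). lra.
  - apply mcshane_le. intros a'. pose proof (Hu a' a).
    pose proof (Htri (p a') b (p a)). pose proof (Hsym b (p a')). lra.
Qed.

Lemma mcshane_le_shift (u w : T -> R) (C : R) (b : B) :
  lipschitz_on w -> (forall a, u a <= w a + C) -> mcshane u b <= mcshane w b + C.
Proof.
  intros Hw H. apply mcshane_le. intros a.
  pose proof (H a). pose proof (mcshane_ge w a b Hw). lra.
Qed.

End McShane.

Section Extension.

Variables (I : Type) (S : ineq I -> Prop) (B : Type) (dB : B -> B -> R)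
  (A : B -> Prop) (f : {b : B | A b} -> Qspace S).
Hypothesis (HI : inhabited I) (HS : forall c, S c -> ineq_wf c) (HdB : is_metric B dB)
  (Hf : forall a a', Qdist S (f a) (f a') <= dB (proj1_sig a) (proj1_sig a'))
  (a0 : {b : B | A b}).

Let F (a : {b : B | A b}) : I -> R := proj1_sig (f a).

Let M (s : R) (i : I) : B -> R := mcshane dB (@proj1_sig B A) (fun a => s * F a i).

Definition qext_fun (b : B) (i : I) : R := (M 1 i b - M (- 1) i b) / 2.

Lemma coord_lipschitz (s : R) (i : I) :
  Rabs s = 1 -> lipschitz_on dB (@proj1_sig B A) (fun a => s * F a i).
Proof.
  intros Hs a a'. pose proof (Rmult_le_Rabs_unit s (F a i - F a' i) Hs).
  assert (Rabs (F a i - F a' i) <= dB (proj1_sig a) (proj1_sig a')).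
  { eapply Rle_trans; [apply Rabs_sub_le_supdist | apply Hf].
    - exact (proj1 (proj2_sig (f a))).
    - exact (proj1 (proj2_sig (f a'))). }
  lra.
Qed.

Lemma coord_lipschitz_pm1 (i : I) :
  lipschitz_on dB (@proj1_sig B A) (fun a => 1 * F a i) /\
  lipschitz_on dB (@proj1_sig B A) (fun a => -1 * F a i).
Proof.
  split; apply coord_lipschitz; [apply Rabs_R1 |].
  change (-1) with (- (1)). rewrite Rabs_Ropp. apply Rabs_R1.
Qed.

Lemma qext_fun_sign (s : R) (i : I) (b : B) :
  Rabs s = 1 -> s * qext_fun b i = (M s i b - M (- s) i b) / 2.
Proof.
  intros Hs. unfold qext_fun.
  (* The literal [-1] is [IZR (-1)], not [- (1)]. *)
  destruct (Rabs_eq_1 s Hs) as [-> | ->];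
    [replace (- (1)) with (-1) | replace (- -1) with 1]; (ring || lra).
Qed.

Lemma qext_fun_near (a : {b : B | A b}) (b : B) (i : I) :
  Rabs (qext_fun b i - F a i) <= dB b (proj1_sig a).
Proof.
  destruct (coord_lipschitz_pm1 i) as [Hp Hm].
  pose proof (mcshane_near dB (@proj1_sig B A) HdB (inhabits a) _ a b Hp).
  pose proof (mcshane_near dB (@proj1_sig B A) HdB (inhabits a) _ a b Hm).
  fold (M 1 i b) (M (- 1) i b) in *. unfold qext_fun.
  apply Rabs_le_between'. apply Rabs_le_between' in H, H0.
  (* [set] identifies occurrences of [proj1_sig a] that differ by an
     eta-expanded predicate, which [lra] would treat as distinct atoms. *)
  set (d := dB b (proj1_sig a)) in *. lra.
Qed.

Lemma qext_fun_pair (s t : R) (i j : I) (C : R) (b : B) :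
  Rabs s = 1 -> Rabs t = 1 -> (forall a, s * F a i + t * F a j <= C) ->
  s * qext_fun b i + t * qext_fun b j <= C.
Proof.
  intros Hs Ht H.
  assert (Hs' : Rabs (- s) = 1) by now rewrite Rabs_Ropp.
  assert (Ht' : Rabs (- t) = 1) by now rewrite Rabs_Ropp.
  assert (Hst : M s i b <= M (- t) j b + C).
  { apply (mcshane_le_shift _ _ HdB (inhabits a0)); [now apply coord_lipschitz |].
    intros a. pose proof (H a). lra. }
  assert (Hts : M t j b <= M (- s) i b + C).
  { apply (mcshane_le_shift _ _ HdB (inhabits a0)); [now apply coord_lipschitz |].
    intros a. pose proof (H a). lra. }
  rewrite (qext_fun_sign s), (qext_fun_sign t) by assumption. lra.
Qed.

Lemma qext_fun_in_Q (b : B) : Qset S (qext_fun b).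
Proof.
  split.
  - destruct (proj1 (proj2_sig (f a0))) as [K HK].
    exists (K + dB b (proj1_sig a0)). intros i.
    pose proof (qext_fun_near a0 b i). pose proof (HK i).
    pose proof (Rabs_triang_inv (qext_fun b i) (F a0 i)). unfold F in *. lra.
  - intros c Sc. pose proof (HS c Sc) as Hwf.
    pose proof (fun a => proj2 (proj2_sig (f a)) c Sc) as HFc.
    destruct c as [s i C | s t i j C]; simpl in *.
    + assert (s * qext_fun b i + s * qext_fun b i <= C + C); [| lra].
      apply qext_fun_pair; auto. intros a. pose proof (HFc a). unfold F. lra.
    + apply qext_fun_pair; tauto.
Qed.

Definition qext (b : B) : Qspace S := exist _ (qext_fun b) (qext_fun_in_Q b).

Lemma qext_nonexpansive (b b' : B) :
  Qdist S (qext b) (qext b') <= dB b b'.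
Proof.
  destruct HdB as [_ [_ [Hsym _]]]. apply supdist_le; [exact HI |]. intros i.
  destruct (coord_lipschitz_pm1 i) as [Hp Hm].
  pose proof (mcshane_lipschitz dB (@proj1_sig B A) HdB (inhabits a0) _ b b' Hp).
  pose proof (mcshane_lipschitz dB (@proj1_sig B A) HdB (inhabits a0) _ b' b Hp).
  pose proof (mcshane_lipschitz dB (@proj1_sig B A) HdB (inhabits a0) _ b b' Hm).
  pose proof (mcshane_lipschitz dB (@proj1_sig B A) HdB (inhabits a0) _ b' b Hm).
  pose proof (Hsym b b'). simpl. unfold qext_fun, M.
  apply Rabs_le_between. lra.
Qed.

Lemma qext_extends (a : {b : B | A b}) : qext (proj1_sig a) = f a.
Proof.
  destruct HdB as [_ [Hzero _]].
  apply eq_sig_hprop; [intros; apply proof_irrelevance |].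
  apply functional_extensionality. intros i. simpl.
  pose proof (qext_fun_near a (proj1_sig a) i) as Hnear.
  rewrite (proj2 (Hzero _ _) eq_refl) in Hnear. apply Rabs_le_between' in Hnear.
  unfold F in Hnear. lra.
Qed.

End Extension.

Theorem proposition2p4 (I : Type) (HI : inhabited I) (S : ineq I -> Prop)
  (HS : forall c, S c -> ineq_wf c)
  (Hne : exists x : I -> R, Qset S x) :
  injective_metric (Qspace S) (Qdist S).
Proof.
  intros B dB HdB A f Hf.
  destruct (classic (inhabited {b : B | A b})) as [[a0] | Hempty].
  - exists (qext I S B dB A f HS HdB Hf a0).
    split; [apply qext_nonexpansive, HI | apply qext_extends].
  - destruct Hne as [x Hx]. exists (fun _ => exist _ x Hx). split.
    + intros b b'. apply supdist_le; [exact HI |]. intros i.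
      rewrite Rminus_diag, Rabs_R0. apply HdB.
    + intros a. exfalso. exact (Hempty (inhabits a)).
Qed.
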